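(* Let $|\psi\rangle$ be an $n$-qubit pure state and $\Gamma=\frac1M\sum_{i=1}^M|\phi_i\rangle\langle\phi_i|$ where $|\phi_1\rangle,\dots,|\phi_M\rangle$ are orthonormal $n$-qubit states. Let $d\ge1$. If for every set $R$ of qubits with $|R|\le d$ we have $\|\psi_R-\Gamma_R\|_1<1$ and $$n\,H_2\!\left(\tfrac{\|\psi_R-\Gamma_R\|_1}{2}\right)<\log M,$$ then the all-to-all circuit complexity satisfies $\mathscr{C}(\psi)>\log d$.
   Context: $\mathscr{C}(\psi)$ is the minimum depth $l$ such that $|\psi\rangle=U_l\cdots U_1|0\rangle^{\otimes n}$ with each layer $U_i$ a tensor product of 2-qubit unitaries on disjoint pairs of qubits (any pairs allowed). Subscript $R$ denotes the reduced state on $R$. Logs base 2; $H_2(p)=-p\log p-(1-p)\log(1-p)$. *)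

From HB Require Import structures.
From mathcomp Require Import all_boot all_order all_algebra.
From mathcomp Require Import classical_sets reals ereal exp.
From mathcomp.real_closed Require Import complex.

Set Implicit Arguments.
Unset Strict Implicit.
Unset Printing Implicit Defensive.

Import Order.TTheory GRing.Theory Num.Theory.
Local Open Scope ring_scope.

Section Quantum.
Variable R : realType.
Local Notation C := (R[i]).

Definition adj (m p : nat) (A : 'M[C]_(m, p)) : 'M[C]_(p, m) :=
  map_mx Num.conj (A^T).

(* logarithm base 2 and binary entropy (ln 0 = 0, so 0 log 0 = 0) *)
Definition log2 (x : R) : R := ln x / ln 2.
Definition H2 (p : R) : R := - (p * log2 p) - (1 - p) * log2 (1 - p).

(* computational basis of n qubits : indices 'I_(2^n); the value of
   qubit k in basis state x is bit k of x *)
Definition bitn (x k : nat) : bool := odd (x %/ 2 ^ k).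
Definition qbit (n : nat) (x : 'I_(2 ^ n)) (k : 'I_n) : bool := bitn x k.

Definition unit_vector (n : nat) (v : 'cV[C]_(2 ^ n)) : Prop :=
  adj v *m v = 1%:M.

Definition proj (n : nat) (v : 'cV[C]_(2 ^ n)) : 'M[C]_(2 ^ n) := v *m adj v.

Definition Gamma (n M : nat) (phi : 'I_M -> 'cV[C]_(2 ^ n)) : 'M[C]_(2 ^ n) :=
  (M%:R)^-1 *: \sum_(i < M) proj (phi i).

Definition orthonormal_vecs (n M : nat) (phi : 'I_M -> 'cV[C]_(2 ^ n)) : Prop :=
  forall i j, adj (phi i) *m phi j = (i == j)%:R%:M.

(* Reduced state on the set S of qubits (partial trace over the complement).
   A basis index a of the 2^|S|-dimensional space assigns to the j-th
   element (in increasing order) of S the bit j of a. *)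
Definition agree_on (n : nat) (S : {set 'I_n}) (a : 'I_(2 ^ #|S|))
  (x : 'I_(2 ^ n)) : bool :=
  [forall k in S, qbit x k == bitn a (index k (enum S))].

Definition agree_off (n : nat) (S : {set 'I_n}) (x y : 'I_(2 ^ n)) : bool :=
  [forall k in ~: S, qbit x k == qbit y k].

Definition ptrace (n : nat) (S : {set 'I_n}) (rho : 'M[C]_(2 ^ n)) :
  'M[C]_(2 ^ #|S|) :=
  \matrix_(a, b) \sum_(x < 2 ^ n) \sum_(y < 2 ^ n)
     (if [&& agree_on a x, agree_on b y & agree_off S x y]
      then rho x y else 0).

(* trace norm ||A||_1 = tr sqrt(A^dagger A) = sum of singular values *)
Definition trnorm (m : nat) (A : 'M[C]_m) : R :=
  complex.Re (\sum_(i < m) sqrtC (spectral_diag (adj A *m A) 0 i)).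

(* circuits: a layer is a list of gates (i, j, U), U a 2-qubit unitary acting
   on the ordered pair of qubits (i, j); all involved qubits are distinct *)
Definition gate (n : nat) := (('I_n * 'I_n) * 'M[C]_4)%type.

Definition unitary (m : nat) (U : 'M[C]_m) : bool := U *m adj U == 1%:M.

Definition layer_qubits (n : nat) (L : seq (gate n)) : seq 'I_n :=
  flatten [seq [:: g.1.1; g.1.2] | g <- L].

Definition valid_layer (n : nat) (L : seq (gate n)) : bool :=
  uniq (layer_qubits L) && all (fun g => unitary g.2) L.

Definition pair_index (n : nat) (x : 'I_(2 ^ n)) (p : 'I_n * 'I_n) : 'I_4 :=
  inord (2 * qbit x p.1 + qbit x p.2).

Definition layer_mx (n : nat) (L : seq (gate n)) : 'M[C]_(2 ^ n) :=
  \matrix_(x, y)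
    ((\prod_(g <- L) g.2 (pair_index x g.1) (pair_index y g.1)) *
     (if [forall k, (k \notin layer_qubits L) ==> (qbit x k == qbit y k)]
      then 1 else 0)).

Definition zero_state (n : nat) : 'cV[C]_(2 ^ n) :=
  \col_i (if val i == 0%N then 1 else 0).

(* circuit c = [:: U_1; ...; U_l] prepares U_l ... U_1 |0...0> *)
Definition run (n : nat) (c : seq (seq (gate n))) : 'cV[C]_(2 ^ n) :=
  foldl (fun v L => layer_mx L *m v) (zero_state n) c.

Definition preparable_in (n : nat) (psi : 'cV[C]_(2 ^ n)) (l : nat) : Prop :=
  exists c : seq (seq (gate n)),
    [/\ size c = l, all (@valid_layer n) c & run c = psi].

(* all-to-all circuit complexity: minimum depth (+oo if none) *)
Definition complexity (n : nat) (psi : 'cV[C]_(2 ^ n)) : \bar R :=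
  ereal_inf [set (l%:R)%:E | l in [set l | preparable_in psi l]].

End Quantum.

From HB Require Import structures.
From mathcomp Require Import all_boot all_order all_algebra.
From mathcomp Require Import classical_sets reals ereal exp.
From mathcomp.real_closed Require Import complex.
From mathcomp Require Import zify ring lra.

Import Order.TTheory GRing.Theory Num.Theory.
Local Open Scope ring_scope.

Set Implicit Arguments.
Unset Strict Implicit.
Unset Printing Implicit Defensive.

(* Let [W] be the unitary of a depth-[l] circuit with [psi = W |0..0>], and suppose
   [2 ^ l <= d].  Measuring [Gamma] in the basis [W |x>] gives a distribution [p]
   with [p x <= 1/M], since [W^* Gamma W] is [1/M] times a projection; so its
   entropy is at least [log M].  For each qubit [k], the projection
   [P_k = W |1><1|_k W^*] acts only on the light cone of [k], a set [R] of at most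
   [2 ^ l <= d] qubits, and [P_k psi = 0]; hence the probability that qubit [k]
   reads [1] is [tr (P_k (Gamma - psi)) <= ||psi_R - Gamma_R||_1 / 2 = t_k < 1/2].
   Gibbs' inequality against the product of the marginals then gives
   [log M <= sum_k H2 (t_k) < log M]. *)

Lemma bitnS x k : bitn x k.+1 = bitn x./2 k.
Proof. by rewrite /bitn expnS divnMA divn2. Qed.

Lemma bitn0 x : bitn x 0 = odd x.
Proof. by rewrite /bitn expn0 divn1. Qed.

Lemma bitn_inj n x y : (x < 2 ^ n)%N -> (y < 2 ^ n)%N ->
  (forall k, (k < n)%N -> bitn x k = bitn y k) -> x = y.
Proof.
elim: n x y => [|n IH] x y.
  by rewrite expn0 !ltnS !leqn0 => /eqP -> /eqP ->.
move=> hx hy h.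
have ho : odd x = odd y by rewrite -!bitn0; apply: h.
have hh : x./2 = y./2.
  apply: IH; try by rewrite -divn2 ltn_divLR // -expnSr.
  by move=> k hk; rewrite -!bitnS; apply: h.
by rewrite -[x]odd_double_half -[y]odd_double_half ho hh.
Qed.

Section Bits.
Variable n : nat.

Definition bits (x : 'I_(2 ^ n)) : {ffun 'I_n -> bool} := [ffun k => qbit x k].

Lemma bits_inj : injective bits.
Proof.
move=> x y /ffunP h; apply/val_inj/(@bitn_inj n); rewrite ?ltn_ord // => k hk.
by have := h (Ordinal hk); rewrite !ffunE.
Qed.

Lemma bits_onto f : f \in codom bits.
Proof.
apply: inj_card_onto; first exact: bits_inj.
by rewrite card_ffun card_bool !card_ord.
Qed.

Definition unbits (f : {ffun 'I_n -> bool}) : 'I_(2 ^ n) := iinv (bits_onto f).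

Lemma unbitsK : cancel unbits bits.
Proof. by move=> f; rewrite /unbits f_iinv. Qed.

Lemma bitsK : cancel bits unbits.
Proof. by move=> x; apply: bits_inj; rewrite unbitsK. Qed.

Lemma qbit_unbits f k : qbit (unbits f) k = f k.
Proof. by have /ffunP/(_ k) := unbitsK f; rewrite ffunE. Qed.

Lemma qbit_inj (x y : 'I_(2 ^ n)) : (forall k, qbit x k = qbit y k) -> x = y.
Proof. by move=> h; apply: bits_inj; apply/ffunP => k; rewrite !ffunE. Qed.

Lemma big_unbits (V : nmodType) (F : 'I_(2 ^ n) -> V) :
  \sum_x F x = \sum_(f : {ffun 'I_n -> bool}) F (unbits f).
Proof. by rewrite (reindex unbits) //; exists bits => ? _; rewrite ?unbitsK ?bitsK. Qed.

End Bits.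

Section Restriction.
Variable n : nat.
Implicit Types (S T : {set 'I_n}) (x y u : 'I_(2 ^ n)).

Definition restr S x : 'I_(2 ^ #|S|) :=
  unbits [ffun j : 'I_#|S| => qbit x (enum_val j)].

Definition extend S x (a : 'I_(2 ^ #|S|)) : 'I_(2 ^ n) :=
  unbits [ffun k => if k \in S then bitn a (index k (enum S)) else qbit x k].
Arguments extend : clear implicits.

Lemma index_enum_val S (j : 'I_#|S|) : index (enum_val j) (enum S) = j.
Proof.
rewrite (enum_val_nth (enum_val j)) index_uniq ?enum_uniq //.
by rewrite -cardE ltn_ord.
Qed.

Lemma index_enum_lt S k : k \in S -> (index k (enum S) < #|S|)%N.
Proof. by move=> hk; rewrite cardE index_mem mem_enum. Qed.

Lemma bitn_restr S x k : k \in S -> bitn (restr S x) (index k (enum S)) = qbit x k.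
Proof.
move=> hk; have -> : bitn (restr S x) (index k (enum S)) =
                     qbit (restr S x) (Ordinal (index_enum_lt hk)) by [].
by rewrite qbit_unbits ffunE (enum_val_nth k) /= nth_index ?mem_enum.
Qed.

Lemma restr_eqP S x y :
  reflect (forall k, k \in S -> qbit x k = qbit y k) (restr S x == restr S y).
Proof.
apply: (iffP eqP) => [h k hk | h]; first by rewrite -(bitn_restr x hk) h bitn_restr.
apply: bits_inj; rewrite !unbitsK; apply/ffunP => j; rewrite !ffunE.
exact/h/enum_valP.
Qed.

Lemma agree_onE S (a : 'I_(2 ^ #|S|)) x : agree_on a x = (a == restr S x).
Proof.
apply/forall_inP/eqP => [h | -> k hk]; last by rewrite bitn_restr.
apply: bits_inj; rewrite unbitsK; apply/ffunP => j; rewrite !ffunE.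
by rewrite (eqP (h _ (enum_valP j))) index_enum_val.
Qed.

Lemma agree_offP S x y :
  reflect (forall k, k \notin S -> qbit x k = qbit y k) (agree_off S x y).
Proof.
by apply: (iffP forall_inP) => h k hk; apply/eqP/h; rewrite inE in hk *.
Qed.

Lemma agree_off_refl S x : agree_off S x x.
Proof. exact/agree_offP. Qed.

Lemma agree_offC S x y : agree_off S x y = agree_off S y x.
Proof. by apply/agree_offP/agree_offP => h k hk; rewrite h. Qed.

Lemma agree_off_trans S y x u : agree_off S x y -> agree_off S y u -> agree_off S x u.
Proof. by move=> /agree_offP h1 /agree_offP h2; apply/agree_offP => k hk; rewrite h1 ?h2. Qed.

Lemma agree_off_sub S T x y : S \subset T -> agree_off S x y -> agree_off T x y.
Proof.
move=> sST /agree_offP h; apply/agree_offP => k hk; apply: h.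
by apply: contra hk; apply: (fintype.subsetP sST).
Qed.

Lemma restr_extend S x a : restr S (extend S x a) = a.
Proof.
apply: bits_inj; rewrite unbitsK; apply/ffunP => j; rewrite !ffunE.
by rewrite qbit_unbits ffunE enum_valP index_enum_val.
Qed.

Lemma agree_off_extend S x a : agree_off S x (extend S x a).
Proof. by apply/agree_offP => k hk; rewrite qbit_unbits ffunE (negbTE hk). Qed.

Lemma agree_off_extend2 S x a b : agree_off S (extend S x a) (extend S x b).
Proof. by apply: (@agree_off_trans _ x); [rewrite agree_offC|]; apply: agree_off_extend. Qed.

Lemma agree_off_extendl S x a y : agree_off S (extend S x a) y = agree_off S x y.
Proof.
apply/idP/idP => h; first exact: agree_off_trans (@agree_off_extend S x a) h.
by apply: (agree_off_trans _ h); rewrite agree_offC agree_off_extend.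
Qed.

Lemma extend_restr S x u : agree_off S x u -> extend S x (restr S u) = u.
Proof.
move=> /agree_offP h; apply: qbit_inj => k; rewrite qbit_unbits ffunE.
by case: ifP => hk; [rewrite bitn_restr | rewrite h ?hk].
Qed.

Lemma sum_agree_off (V : nmodType) S x (G : 'I_(2 ^ n) -> V) :
  \sum_(u | agree_off S x u) G u = \sum_a G (extend S x a).
Proof.
rewrite (reindex (extend S x)) /=; last first.
  exists (restr S) => [a _ | u]; first by rewrite restr_extend.
  by rewrite inE => h; rewrite extend_restr.
by apply: eq_bigl => a; rewrite agree_off_extend.
Qed.

End Restriction.
Arguments extend [n] S x a.

Section Adjoint.
Variable R : realType.
Local Notation C := (R[i]).
Implicit Types m p q : nat.

Lemma adjE m p (A : 'M[C]_(m, p)) i j : adj A i j = (A j i)^*.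
Proof. by rewrite /adj !mxE. Qed.

Lemma adjK m p (A : 'M[C]_(m, p)) : adj (adj A) = A.
Proof. by apply/matrixP => i j; rewrite !adjE conjCK. Qed.

Lemma adjM m p q (A : 'M[C]_(m, p)) (B : 'M[C]_(p, q)) :
  adj (A *m B) = adj B *m adj A.
Proof. by rewrite /adj trmx_mul map_mxM. Qed.

Lemma adj1mx m : adj (1%:M : 'M[C]_m) = 1%:M.
Proof. by apply/matrixP => i j; rewrite adjE !mxE eq_sym; case: eqP; rewrite ?conjC0 ?conjC1. Qed.

Lemma adjN m p (A : 'M[C]_(m, p)) : adj (- A) = - adj A.
Proof. by apply/matrixP => i j; rewrite !adjE !mxE rmorphN. Qed.

Lemma adjB m p (A B : 'M[C]_(m, p)) : adj (A - B) = adj A - adj B.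
Proof. by apply/matrixP => i j; rewrite !adjE !mxE rmorphB. Qed.

Lemma adj_scale m p (c : C) (A : 'M[C]_(m, p)) : adj (c *: A) = c^* *: adj A.
Proof. by apply/matrixP => i j; rewrite /adj !mxE rmorphM. Qed.

Lemma adj_sum m p (I : finType) (F : I -> 'M[C]_(m, p)) :
  adj (\sum_i F i) = \sum_i adj (F i).
Proof.
apply/matrixP => a b; rewrite adjE !summxE rmorph_sum.
by apply: eq_bigr => i _; rewrite adjE.
Qed.

Lemma adj_proj n (v : 'cV[C]_(2 ^ n)) : adj (proj v) = proj v.
Proof. by rewrite /proj adjM adjK. Qed.

Lemma unitary_conjK m (U A : 'M[C]_m) : U *m adj U = 1%:M ->
  adj U *m (U *m A *m adj U) *m U = A.
Proof.
move=> hU; have hU' : adj U *m U = 1%:M by apply: mulmx1C.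
by rewrite !mulmxA hU' mul1mx -mulmxA hU' mulmx1.
Qed.

Lemma mxtrace_conj m (W X : 'M[C]_m) : adj W *m W = 1%:M -> \tr (W *m X *m adj W) = \tr X.
Proof. by move=> hW; rewrite mxtrace_mulC mulmxA hW mul1mx. Qed.

End Adjoint.

Section Local.
Variable R : realType.
Local Notation C := (R[i]).
Variable n : nat.
Implicit Types (S T : {set 'I_n}) (x y u : 'I_(2 ^ n)) (A B : 'M[C]_(2 ^ n)).

Definition embed S (Q : 'M[C]_(2 ^ #|S|)) : 'M[C]_(2 ^ n) :=
  \matrix_(x, y) if agree_off S x y then Q (restr S x) (restr S y) else 0.
Arguments embed : clear implicits.

(* [local S A] says that [A = Q (x) 1], with [Q] acting on the qubits of [S]. *)
Definition local S A : Prop :=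
  (forall x y, ~~ agree_off S x y -> A x y = 0) /\
  (forall x y x' y', agree_off S x y -> agree_off S x' y' ->
     restr S x = restr S x' -> restr S y = restr S y' -> A x y = A x' y').

Definition block S A : 'M[C]_(2 ^ #|S|) :=
  let x0 := unbits [ffun => false] in
  \matrix_(a, b) A (extend S x0 a) (extend S x0 b).
Arguments block : clear implicits.

Lemma local_embedE S A : local S A -> A = embed S (block S A).
Proof.
move=> [h1 h2]; apply/matrixP => x y; rewrite !mxE.
case: ifP => h; last by rewrite h1 ?h.
by apply: h2; rewrite ?agree_off_extend2 ?restr_extend.
Qed.

Lemma embed_local S Q : local S (embed S Q).
Proof.
split=> [x y h | x y x' y' h h' hx hy]; rewrite !mxE; first by rewrite (negbTE h).
by rewrite h h' hx hy.
Qed.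

Lemma block_embed S Q : block S (embed S Q) = Q.
Proof. by apply/matrixP => a b; rewrite !mxE agree_off_extend2 !restr_extend. Qed.

Lemma embed_inj S : injective (embed S).
Proof. by move=> Q1 Q2 h; rewrite -(block_embed Q1) h block_embed. Qed.

Lemma embedM S Q1 Q2 : embed S Q1 *m embed S Q2 = embed S (Q1 *m Q2).
Proof.
apply/matrixP => x y; rewrite !mxE.
transitivity (\sum_(u | agree_off S x u) Q1 (restr S x) (restr S u) * embed S Q2 u y).
  by rewrite [RHS]big_mkcond; apply: eq_bigr => u _; rewrite mxE; case: ifP; rewrite ?mul0r.
rewrite sum_agree_off; case: ifP => hxy.
  by apply: eq_bigr => a _; rewrite mxE agree_off_extendl hxy restr_extend.
by rewrite big1 // => a _; rewrite mxE agree_off_extendl hxy mulr0.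
Qed.

Lemma embed_adj S Q : adj (embed S Q) = embed S (adj Q).
Proof.
apply/matrixP => x y; rewrite /adj !mxE agree_offC.
by case: ifP; rewrite ?conjC0.
Qed.

Lemma embed1 S : embed S 1%:M = 1%:M.
Proof.
apply/matrixP => x y; rewrite !mxE.
have [<-|nxy] := eqVneq x y; first by rewrite agree_off_refl eqxx.
case: ifP => // h; case: eqP => // e; case/eqP: nxy.
by rewrite -(extend_restr h) -e extend_restr // agree_off_refl.
Qed.

Lemma localM S A B : local S A -> local S B -> local S (A *m B).
Proof. by move=> /local_embedE -> /local_embedE ->; rewrite embedM; apply: embed_local. Qed.

Lemma local_adj S A : local S A -> local S (adj A).
Proof. by move=> /local_embedE ->; rewrite embed_adj; apply: embed_local. Qed.

Lemma local_agree_off S A x y : local S A -> A x y != 0 -> agree_off S x y.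
Proof. by move=> [h1 _] nz; apply: contraR nz => h; rewrite h1. Qed.

Lemma local_sub S T A : S \subset T -> local S A -> local T A.
Proof.
move=> sST [h1 h2]; split=> [x y h | x y x' y' h h' /eqP/restr_eqP hx /eqP/restr_eqP hy].
  by apply: h1; apply: contra h; apply: agree_off_sub.
have offS : agree_off S x y = agree_off S x' y'.
  apply/agree_offP/agree_offP => hS k hk; have [kT|kT] := boolP (k \in T).
  - by rewrite -hx // -hy // hS.
  - exact: (agree_offP _ _ _ h').
  - by rewrite hx // hy // hS.
  - exact: (agree_offP _ _ _ h).
have [hS|hS] := boolP (agree_off S x y); last by rewrite !h1 // -offS.
by apply: h2; rewrite -?offS //; apply/eqP/restr_eqP => k /(fintype.subsetP sST); [apply: hx|apply: hy].
Qed.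

End Local.
Arguments embed [R n] S Q.
Arguments block [R n] S A.

Lemma mxtrace_mul_delta (K : pzRingType) m (Q : 'M[K]_m) i j :
  \tr (Q *m delta_mx i j) = Q j i.
Proof.
rewrite /mxtrace (bigD1 j) //= big1 ?addr0 => [|k /negbTE nkj]; rewrite mxE.
  rewrite (bigD1 i) //= big1 ?addr0 => [|l /negbTE nli];
  by rewrite !mxE ?eqxx ?nli ?mulr0 ?mulr1.
by rewrite big1 // => l _; rewrite !mxE nkj andbF mulr0.
Qed.

Section PartialTrace.
Variable R : realType.
Local Notation C := (R[i]).
Variable n : nat.
Implicit Types (S : {set 'I_n}) (x y : 'I_(2 ^ n)) (A B rho : 'M[C]_(2 ^ n)).

Lemma ptrace_delta S rho : ptrace S rho =
  \sum_x \sum_(y | agree_off S x y) rho x y *: delta_mx (restr S x) (restr S y).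
Proof.
apply/matrixP => a b; rewrite summxE !mxE; apply: eq_bigr => x _.
rewrite summxE [RHS]big_mkcond; apply: eq_bigr => y _; rewrite !agree_onE.
by case: agree_off; rewrite ?andbF // !mxE andbT; case: (_ && _); rewrite ?mulr1 ?mulr0.
Qed.

Lemma tr_embed S (Q : 'M[C]_(2 ^ #|S|)) rho :
  \tr (embed S Q *m rho) = \tr (Q *m ptrace S rho).
Proof.
transitivity (\sum_x \sum_(y | agree_off S x y) rho x y * Q (restr S y) (restr S x)).
  rewrite /mxtrace; under eq_bigr => i _ do rewrite mxE.
  rewrite exchange_big; apply: eq_bigr => x _; rewrite [RHS]big_mkcond; apply: eq_bigr => y _.
  by rewrite mxE agree_offC; case: ifP; rewrite ?mul0r // mulrC.
rewrite ptrace_delta mulmx_sumr raddf_sum; apply: eq_bigr => x _.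
rewrite mulmx_sumr raddf_sum; apply: eq_bigr => y _.
by rewrite /= -scalemxAr mxtraceZ mxtrace_mul_delta.
Qed.

Lemma ptraceB S A B : ptrace S (A - B) = ptrace S A - ptrace S B.
Proof.
apply/matrixP => a b; rewrite !mxE -sumrB; apply: eq_bigr => x _.
by rewrite -sumrB; apply: eq_bigr => y _; rewrite !mxE; case: ifP; rewrite ?subr0.
Qed.

Lemma ptrace_adj S A : adj (ptrace S A) = ptrace S (adj A).
Proof.
apply/matrixP => a b; rewrite /adj !mxE rmorph_sum exchange_big.
apply: eq_bigr => x _; rewrite rmorph_sum; apply: eq_bigr => y _ /=.
rewrite !mxE [agree_off S x y]agree_offC.
by case: (agree_on a y); case: (agree_on b x); case: agree_off; rewrite /= ?conjC0.
Qed.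

Lemma tr_ptrace S A : \tr (ptrace S A) = \tr A.
Proof. by rewrite -[ptrace S A]mul1mx -tr_embed embed1 mul1mx. Qed.

End PartialTrace.

Section DisjointSupports.
Variable R : realType.
Local Notation C := (R[i]).
Variable n : nat.
Implicit Types (S : {set 'I_n}) (x y u : 'I_(2 ^ n)) (A B : 'M[C]_(2 ^ n)).

Definition splice S y x : 'I_(2 ^ n) :=
  unbits [ffun k => if k \in S then qbit y k else qbit x k].

Lemma qbit_splice S y x k : qbit (splice S y x) k = if k \in S then qbit y k else qbit x k.
Proof. by rewrite qbit_unbits ffunE. Qed.

Variables (S1 S2 : {set 'I_n}).
Hypothesis disjS : forall k, k \in S1 -> k \notin S2.

Lemma mulmx_disjoint_local A B x y : local S1 A -> local S2 B ->
  (A *m B) x y = A x (splice S1 y x) * B (splice S1 y x) y.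
Proof.
move=> hA hB; rewrite mxE (bigD1 (splice S1 y x)) //= big1 ?addr0 // => u hu.
have [->|/(local_agree_off hA)/agree_offP h1] := eqVneq (A x u) 0; first by rewrite mul0r.
have [->|/(local_agree_off hB)/agree_offP h2] := eqVneq (B u y) 0; first by rewrite mulr0.
case/eqP: hu; apply: qbit_inj => k; rewrite qbit_splice.
by case: ifP => hk; [rewrite h2 ?disjS | rewrite h1 ?hk].
Qed.

Lemma local_splice A x y : local S1 A ->
  (forall k, k \notin S1 -> k \notin S2 -> qbit x k = qbit y k) ->
  A x (splice S1 y x) = A (splice S2 y x) y.
Proof.
move=> [_ hA] hxy; apply: hA.
- by apply/agree_offP => k hk; rewrite qbit_splice (negbTE hk).
- apply/agree_offP => k hk; rewrite qbit_splice.
  by case: ifP => // h2; rewrite hxy ?h2.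
- by apply/eqP/restr_eqP => k hk; rewrite qbit_splice (negbTE (disjS hk)).
- by apply/eqP/restr_eqP => k hk; rewrite qbit_splice hk.
Qed.

End DisjointSupports.

Lemma local_disjoint_commute (R : realType) n (S1 S2 : {set 'I_n})
    (A B : 'M[R[i]]_(2 ^ n)) :
  (forall k, k \in S1 -> k \notin S2) -> local S1 A -> local S2 B ->
  A *m B = B *m A.
Proof.
move=> disj12 hA hB.
have disj21 k : k \in S2 -> k \notin S1 by move=> h; apply: contraL h; apply: disj12.
have hS1 : local (S1 :|: S2) A by apply: local_sub hA; apply: finset.subsetUl.
have hS2 : local (S1 :|: S2) B by apply: local_sub hB; apply: finset.subsetUr.
apply/matrixP => x y; have [hxy|nxy] := boolP (agree_off (S1 :|: S2) x y); last first.
  by rewrite (proj1 (localM hS1 hS2)) // (proj1 (localM hS2 hS1)).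
have hxy' k : k \notin S1 -> k \notin S2 -> qbit x k = qbit y k.
  by move=> h1 h2; apply: (agree_offP _ _ _ hxy); rewrite inE negb_or h1.
rewrite (mulmx_disjoint_local disj12) // (mulmx_disjoint_local disj21) // mulrC.
congr (_ * _); first by rewrite (local_splice disj21 hB) // => k h2 h1; apply: hxy'.
by rewrite (local_splice disj12 hA).
Qed.

Section Layers.
Variable R : realType.
Local Notation C := (R[i]).
Variable n : nat.
Implicit Types (T : {set 'I_n}) (x y u : 'I_(2 ^ n)) (g : gate R n) (L : seq (gate R n)).

Definition layer_support L : {set 'I_n} := [set k | k \in layer_qubits L].

Lemma layer_qubits_cons g L : layer_qubits (g :: L) = g.1.1 :: g.1.2 :: layer_qubits L.
Proof. by []. Qed.

Lemma layer_qubits_cat L1 L2 :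
  layer_qubits (L1 ++ L2) = layer_qubits L1 ++ layer_qubits L2.
Proof. by rewrite /layer_qubits map_cat flatten_cat. Qed.

Lemma in_layer_support_cons g L k :
  (k \in layer_support (g :: L)) = [|| k == g.1.1, k == g.1.2 | k \in layer_support L].
Proof. by rewrite /layer_support inE layer_qubits_cons !in_cons inE. Qed.

Lemma in_layer_support1 g k : (k \in layer_support [:: g]) = (k == g.1.1) || (k == g.1.2).
Proof. by rewrite in_layer_support_cons inE orbF. Qed.

Lemma mem_layer_qubits g L : g \in L ->
  (g.1.1 \in layer_qubits L) && (g.1.2 \in layer_qubits L).
Proof.
elim: L => // h L IH; rewrite in_cons layer_qubits_cons !in_cons.
by case/orP => [/eqP->|/IH/andP[-> ->]]; rewrite ?eqxx !orbT.
Qed.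

Lemma pair_index_eq x y (p : 'I_n * 'I_n) :
  qbit x p.1 = qbit y p.1 -> qbit x p.2 = qbit y p.2 -> pair_index x p = pair_index y p.
Proof. by rewrite /pair_index => -> ->. Qed.

Lemma layer_mxE L x y : layer_mx L x y =
  if agree_off (layer_support L) x y then
    \prod_(g <- L) g.2 (pair_index x g.1) (pair_index y g.1) else 0.
Proof.
rewrite mxE; have -> : [forall k, (k \notin layer_qubits L) ==> (qbit x k == qbit y k)] =
          agree_off (layer_support L) x y by apply: eq_forallb => k; rewrite !inE.
by case: ifP; rewrite ?mulr1 ?mulr0.
Qed.

Lemma layer_mx_local L : local (layer_support L) (layer_mx L).
Proof.
split=> [x y h | x y x' y' h h' /eqP/restr_eqP hx /eqP/restr_eqP hy].
  by rewrite layer_mxE (negbTE h).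
rewrite !layer_mxE h h'; apply: eq_big_seq => g /mem_layer_qubits /andP[h1 h2].
by rewrite (@pair_index_eq x x') ?(@pair_index_eq y y') ?hx ?hy ?inE.
Qed.

Lemma layer_mx_nil : layer_mx ([::] : seq (gate R n)) = 1%:M.
Proof.
apply/matrixP => x y; rewrite layer_mxE big_nil !mxE.
have [<-|nxy] := eqVneq x y; first by rewrite agree_off_refl.
case: ifP => // h; case/eqP: nxy; apply: qbit_inj => k.
by apply: (agree_offP _ _ _ h); rewrite inE.
Qed.

Lemma layer_mx_cat L1 L2 :
  (forall k, k \in layer_support L1 -> k \notin layer_support L2) ->
  layer_mx (L1 ++ L2) = layer_mx L1 *m layer_mx L2.
Proof.
move=> dis; apply/matrixP => x y.
rewrite (mulmx_disjoint_local dis x y (layer_mx_local L1) (layer_mx_local L2)).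
set u0 := splice (layer_support L1) y x.
have o1 : agree_off (layer_support L1) x u0.
  by apply/agree_offP => k hk; rewrite qbit_splice (negbTE hk).
have o2 : agree_off (layer_support (L1 ++ L2)) x y = agree_off (layer_support L2) u0 y.
  apply/agree_offP/agree_offP => h k; rewrite !inE ?layer_qubits_cat ?mem_cat ?negb_or.
    by move=> hk; rewrite qbit_splice inE; case: ifP => // h1; apply: h; rewrite !inE layer_qubits_cat mem_cat h1.
  by move=> /andP[k1 k2]; rewrite -h ?inE // qbit_splice inE (negbTE k1).
rewrite !layer_mxE o1 -o2 big_cat /=; case: ifP; rewrite ?mulr0 // => _.
congr (_ * _); apply: eq_big_seq => g /mem_layer_qubits /andP[h1 h2].
  by congr (g.2 _ _); apply: pair_index_eq; rewrite qbit_splice inE ?h1 ?h2.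
congr (g.2 _ _); apply: pair_index_eq; rewrite qbit_splice; case: ifP => // hk;
  by move: (dis _ hk); rewrite inE ?h1 ?h2.
Qed.

Lemma layer_mx_cons g L : uniq (layer_qubits (g :: L)) ->
  layer_mx (g :: L) = layer_mx [:: g] *m layer_mx L.
Proof.
rewrite layer_qubits_cons /= !inE negb_or => /andP[/andP[_ h1] /andP[h2 _]].
apply: (@layer_mx_cat [:: g] L) => k; rewrite in_layer_support1 inE.
by case/orP => /eqP ->.
Qed.

End Layers.

Lemma bitn_pair1 (a b : bool) : bitn (2 * a + b) 1 = a.
Proof. by case: a; case: b. Qed.

Lemma bitn_pair0 (a b : bool) : bitn (2 * a + b) 0 = b.
Proof. by case: a; case: b. Qed.

Lemma pair_bitnK (c : 'I_4) : (2 * bitn c 1 + bitn c 0)%N = c.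
Proof. by case: c => [[|[|[|[|c]]]] hc]. Qed.

Section TwoQubitGate.
Variable R : realType.
Local Notation C := (R[i]).
Variables (n : nat) (i j : 'I_n) (U : 'M[C]_4).
Hypothesis nij : i != j.
Implicit Types (x y u : 'I_(2 ^ n)) (c : 'I_4).
Let S := layer_support [:: ((i, j), U)].

Lemma pair_index_val x : pair_index x (i, j) = (2 * qbit x i + qbit x j)%N :> nat.
Proof. by rewrite /pair_index inordK //; case: (qbit x i); case: (qbit x j). Qed.

Definition set_pair x c : 'I_(2 ^ n) :=
  unbits [ffun k => if k == i then bitn c 1 else if k == j then bitn c 0 else qbit x k].

Lemma pair_index_set_pair x c : pair_index (set_pair x c) (i, j) = c.
Proof.
apply: ord_inj; rewrite pair_index_val !qbit_unbits !ffunE eqxx.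
by rewrite eq_sym (negbTE nij) eqxx pair_bitnK.
Qed.

Lemma agree_off_set_pair x c : agree_off S x (set_pair x c).
Proof.
apply/agree_offP => k; rewrite in_layer_support1 negb_or => /andP[k1 k2].
by rewrite qbit_unbits ffunE (negbTE k1) (negbTE k2).
Qed.

Lemma set_pair_index x u : agree_off S x u -> set_pair x (pair_index u (i, j)) = u.
Proof.
move=> /agree_offP h; apply: qbit_inj => k; rewrite qbit_unbits ffunE.
case: eqP => [->|ki]; first by rewrite pair_index_val bitn_pair1.
case: eqP => [->|kj]; first by rewrite pair_index_val bitn_pair0.
by apply: h; rewrite in_layer_support1; apply/norP; split; apply/eqP.
Qed.

Lemma sum_agree_off_pair (V : nmodType) x (F : 'I_(2 ^ n) -> V) :
  \sum_(u | agree_off S x u) F u = \sum_c F (set_pair x c).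
Proof.
rewrite (reindex (set_pair x)) /=; last first.
  exists (fun u => pair_index u (i, j)) => [c _ | u]; first by rewrite pair_index_set_pair.
  by rewrite inE => h; rewrite set_pair_index.
by apply: eq_bigl => c; rewrite agree_off_set_pair.
Qed.

Lemma agree_off_set_pair_eq y x c : agree_off S y (set_pair x c) = agree_off S y x.
Proof.
apply/idP/idP => h; last exact: agree_off_trans h (agree_off_set_pair x c).
by apply: (agree_off_trans h); rewrite agree_offC agree_off_set_pair.
Qed.

Lemma pair_index_inj x y : agree_off S x y ->
  (pair_index x (i, j) == pair_index y (i, j)) = (x == y).
Proof.
move=> hxy; apply/eqP/eqP => [e|-> //].
by rewrite -(set_pair_index (agree_off_refl S x)) -(set_pair_index hxy) e.
Qed.

Lemma gate_layer_unitary : unitary U ->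
  layer_mx [:: ((i, j), U)] *m adj (layer_mx [:: ((i, j), U)]) = 1%:M.
Proof.
move=> /eqP hU; apply/matrixP => x y; rewrite mxE.
transitivity (\sum_(u | agree_off S x u) U (pair_index x (i, j)) (pair_index u (i, j)) *
    (if agree_off S y u then U (pair_index y (i, j)) (pair_index u (i, j)) else 0)^*).
  rewrite [RHS]big_mkcond; apply: eq_bigr => u _; rewrite adjE !layer_mxE !big_seq1 /=.
  by case: ifP; rewrite ?mul0r.
rewrite sum_agree_off_pair.
under eq_bigr => c _ do rewrite pair_index_set_pair agree_off_set_pair_eq.
rewrite mxE; have [hyx|hyx] := boolP (agree_off S y x); last first.
  rewrite big1 => [|c _]; last by rewrite conjC0 mulr0.
  by case: eqP => // e; move: hyx; rewrite e agree_off_refl.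
transitivity ((U *m adj U) (pair_index x (i, j)) (pair_index y (i, j))).
  by rewrite mxE; apply: eq_bigr => c _; rewrite adjE.
by rewrite hU !mxE pair_index_inj // agree_offC.
Qed.

End TwoQubitGate.

Section Lightcone.
Variable R : realType.
Local Notation C := (R[i]).
Variable n : nat.
Implicit Types (T : {set 'I_n}) (g : gate R n) (L : seq (gate R n)) (A : 'M[C]_(2 ^ n)).

Lemma valid_layer_cons g L : valid_layer (g :: L) ->
  [/\ valid_layer L, unitary g.2 & uniq (layer_qubits (g :: L))].
Proof.
move=> hv; have hu : uniq (layer_qubits (g :: L)) by case/andP: hv.
move: hv; rewrite /valid_layer layer_qubits_cons /=.
move=> /andP[/andP[_ /andP[_ u]] /andP[hg ha]].
by split => //; rewrite /valid_layer u ha.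
Qed.

Lemma layer_mx_unitary L : valid_layer L -> layer_mx L *m adj (layer_mx L) = 1%:M.
Proof.
elim: L => [|g L IH]; first by rewrite layer_mx_nil adj1mx mulmx1.
move=> /valid_layer_cons [hvL hg hu].
rewrite (layer_mx_cons hu) adjM mulmxA -(mulmxA _ (layer_mx L)) IH // mulmx1.
move: hu hg; case: g => [[i j] U] /= /andP[]; rewrite !inE negb_or => /andP[nij _] _.
exact: gate_layer_unitary.
Qed.

Fixpoint spread L T : {set 'I_n} :=
  if L is g :: L' then
    if (g.1.1 \in T) || (g.1.2 \in T) then g.1.1 |: (g.1.2 |: spread L' T)
    else spread L' T
  else T.

Lemma subset_spread L T : T \subset spread L T.
Proof.
elim: L => [|g L IH] /=; first exact: fintype.subxx.
case: ifP => // _; apply: (fintype.subset_trans IH).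
by apply: (fintype.subset_trans _ (finset.subsetUr _ _)); apply: finset.subsetUr.
Qed.

Lemma spread_sub L T : spread L T \subset T :|: layer_support L.
Proof.
elim: L => [|g L IH] /=; first exact: finset.subsetUl.
have sub : T :|: layer_support L \subset T :|: layer_support (g :: L).
  by apply/finset.setUS/fintype.subsetP => k; rewrite in_layer_support_cons => ->; rewrite !orbT.
case: ifP => _; last exact: (fintype.subset_trans IH).
apply/fintype.subsetP => k /setU1P [->|/setU1P [->|h]];
  try by rewrite finset.in_setU in_layer_support_cons eqxx !orbT.
by move/fintype.subsetP: (fintype.subset_trans IH sub); apply.
Qed.

Lemma spread_disjoint g L T : uniq (layer_qubits (g :: L)) ->
  ~~ ((g.1.1 \in T) || (g.1.2 \in T)) ->
  forall k, k \in layer_support [:: g] -> k \notin spread L T.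
Proof.
move=> hu htouch k hk; apply/negP => /(fintype.subsetP (spread_sub L T)).
rewrite inE => /orP[kT|kL].
  by case/negP: htouch; move: hk; rewrite in_layer_support1 => /orP[]/eqP <-; rewrite kT ?orbT.
move: hu; rewrite layer_qubits_cons /= !inE negb_or => /andP[/andP[_ h1] /andP[h2 _]].
by move: hk; rewrite in_layer_support1 => /orP[]/eqP e; subst k; rewrite inE in kL; rewrite kL in h1 h2.
Qed.

Lemma local_layer_conj L T A : valid_layer L -> local T A ->
  local (spread L T) (layer_mx L *m A *m adj (layer_mx L)).
Proof.
elim: L => [|g L IH] hv hA /=; first by rewrite layer_mx_nil adj1mx mul1mx mulmx1.
have [hvL hg hu] := valid_layer_cons hv.
have hB := IH hvL hA; set B := layer_mx L *m A *m adj (layer_mx L) in hB.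
have -> : layer_mx (g :: L) *m A *m adj (layer_mx (g :: L)) =
          layer_mx [:: g] *m B *m adj (layer_mx [:: g]).
  by rewrite (layer_mx_cons hu) adjM /B !mulmxA.
have hG := layer_mx_local [:: g].
case: ifP => htouch; last first.
  have hGU : valid_layer [:: g].
    by move: hu; rewrite /valid_layer /= hg !andbT !inE negb_or => /andP[/andP[-> _] _].
  rewrite (local_disjoint_commute (spread_disjoint hu (negbT htouch)) hG hB).
  by rewrite -mulmxA layer_mx_unitary // mulmx1.
set T' := g.1.1 |: (g.1.2 |: spread L T).
have sG : layer_support [:: g] \subset T'.
  by apply/fintype.subsetP => k; rewrite in_layer_support1 !inE => /orP[]->; rewrite ?orbT.
have sB : spread L T \subset T'.
  by apply: (fintype.subset_trans _ (finset.subsetUr _ _)); apply: finset.subsetUr.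
have hG' := local_sub sG hG.
have hB' := local_sub sB hB.
by apply: localM; [apply: localM|apply: local_adj].
Qed.

Lemma card_spread L T : uniq (layer_qubits L) ->
  (#|spread L T| <= #|T| + #|T :&: layer_support L|)%N.
Proof.
elim: L => [|g L IH] hu; first exact: leq_addr.
move: (hu); rewrite layer_qubits_cons /= => /andP[h1 /andP[h2 /IH IH']].
move: h1; rewrite inE negb_or => /andP[_ n1].
have sub : T :&: layer_support L \subset T :&: layer_support (g :: L).
  by apply/finset.setIS/fintype.subsetP => k; rewrite in_layer_support_cons => ->; rewrite !orbT.
rewrite [spread _ _]/=; case: ifP => ht; last first.
  by apply: (leq_trans IH'); rewrite leq_add2l subset_leq_card.
have hTG := subset_spread L T.
have grow1 : (#|g.1.1 |: (g.1.2 |: spread L T)| <= #|spread L T| + 1)%N.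
  rewrite cardsU1 (cardsU1 g.1.2); case/orP: ht => h.
    by rewrite finset.in_setU1 (fintype.subsetP hTG _ h) orbT add0n addnC leq_add2l leq_b1.
  by rewrite (fintype.subsetP hTG _ h) add0n addnC leq_add2l leq_b1.
have touch1 : (#|T :&: layer_support L| < #|T :&: layer_support (g :: L)|)%N.
  apply/proper_card/properP; split => //.
  case/orP: ht => h; [exists g.1.1 | exists g.1.2];
    rewrite ?finset.in_setI ?h ?in_layer_support_cons ?eqxx ?orbT //= inE;
    by [rewrite (negbTE n1) | rewrite (negbTE h2)].
by apply: (leq_trans grow1); rewrite addn1 (leq_ltn_trans IH') // ltn_add2l.
Qed.

End Lightcone.

Section Circuit.
Variable R : realType.
Local Notation C := (R[i]).
Variable n : nat.
Implicit Types (T : {set 'I_n}) (c : seq (seq (gate R n))) (A : 'M[C]_(2 ^ n)).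

Definition circuit_mx c : 'M[C]_(2 ^ n) := foldl (fun W L => layer_mx L *m W) 1%:M c.

Definition lightcone c T : {set 'I_n} := foldl (fun T L => spread L T) T c.

Lemma circuit_mx_rcons c L : circuit_mx (rcons c L) = layer_mx L *m circuit_mx c.
Proof. by rewrite /circuit_mx foldl_rcons. Qed.

Lemma lightcone_rcons c L T : lightcone (rcons c L) T = spread L (lightcone c T).
Proof. by rewrite /lightcone foldl_rcons. Qed.

Lemma run_circuit_mx c : run c = circuit_mx c *m zero_state R n.
Proof.
elim/last_ind: c => [|c L IH]; first by rewrite mul1mx.
by rewrite circuit_mx_rcons /run foldl_rcons -/(run c) IH mulmxA.
Qed.

Lemma circuit_mx_unitary c : all (@valid_layer R n) c ->
  circuit_mx c *m adj (circuit_mx c) = 1%:M.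
Proof.
elim/last_ind: c => [|c L IH]; first by rewrite /circuit_mx /= adj1mx mulmx1.
rewrite all_rcons => /andP[hL hc].
rewrite circuit_mx_rcons adjM mulmxA -(mulmxA _ (circuit_mx c)) IH // mulmx1.
exact: layer_mx_unitary.
Qed.

Lemma local_circuit_conj c T A : all (@valid_layer R n) c -> local T A ->
  local (lightcone c T) (circuit_mx c *m A *m adj (circuit_mx c)).
Proof.
move=> + hA; elim/last_ind: c => [|c L IH]; first by rewrite /circuit_mx /= adj1mx mul1mx mulmx1.
rewrite all_rcons => /andP[hL hc]; rewrite circuit_mx_rcons lightcone_rcons adjM.
have -> : layer_mx L *m circuit_mx c *m A *m (adj (circuit_mx c) *m adj (layer_mx L)) =
  layer_mx L *m (circuit_mx c *m A *m adj (circuit_mx c)) *m adj (layer_mx L).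
  by rewrite !mulmxA.
exact: local_layer_conj (IH hc).
Qed.

Lemma card_lightcone c T : all (@valid_layer R n) c ->
  (#|lightcone c T| <= 2 ^ size c * #|T|)%N.
Proof.
elim/last_ind: c => [|c L IH]; first by rewrite expn0 mul1n.
rewrite all_rcons lightcone_rcons size_rcons expnS => /andP[/andP[hu _] /IH hc].
have := card_spread (lightcone c T) hu.
have := subset_leq_card (finset.subsetIl (lightcone c T) (layer_support L)).
lia.
Qed.

Lemma card_lightcone1 c k : all (@valid_layer R n) c ->
  (#|lightcone c [set k]| <= 2 ^ size c)%N.
Proof. by move=> /(card_lightcone [set k]); rewrite cards1 muln1. Qed.

End Circuit.

Section HermitianProjection.
Variable R : realType.
Local Notation C := (R[i]).
Variable m : nat.
Implicit Types (E V : 'M[C]_m).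

Definition hproj E := adj E = E /\ E *m E = E.

Lemma hproj1B E : hproj E -> hproj (1%:M - E).
Proof.
move=> [h1 h2]; split; first by rewrite adjB adj1mx h1.
by rewrite mulmxBl !mulmxBr h2 !mul1mx !mulmx1 subrr subr0.
Qed.

Lemma hproj_conj E V : adj V *m V = 1%:M -> hproj E -> hproj (V *m E *m adj V).
Proof.
move=> hV [h1 h2]; split; first by rewrite !adjM adjK h1 mulmxA.
by rewrite -!mulmxA (mulmxA (adj V)) hV mul1mx !mulmxA -(mulmxA V E E) h2.
Qed.

(* [E i i = (adj E *m E) i i] is a sum of squared moduli. *)
Lemma hproj_diag_ge0 E i : hproj E -> 0 <= E i i.
Proof.
move=> [h1 h2]; rewrite -{1}h2 -{2}h1 mxE.
by apply: sumr_ge0 => j _; rewrite adjE mul_conjC_ge0.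
Qed.

Lemma hproj_diag_le1 E i : hproj E -> E i i <= 1.
Proof. by move=> /hproj1B /(hproj_diag_ge0 i); rewrite !mxE eqxx subr_ge0. Qed.

End HermitianProjection.

Section QubitProjection.
Variable R : realType.
Local Notation C := (R[i]).
Variable n : nat.

Definition qubit1_proj (k : 'I_n) : 'M[C]_(2 ^ n) := \matrix_(x, y) ((x == y) && qbit x k)%:R.

Lemma qubit1_proj_local k : local [set k] (qubit1_proj k).
Proof.
have eq1 x y : agree_off [set k] x y -> (x == y) = (qbit x k == qbit y k).
  move=> /agree_offP h; apply/eqP/eqP => [-> //|e]; apply: qbit_inj => k'.
  by case: (k' =P k) => [-> //|ne]; apply: h; rewrite inE; apply/eqP.
split=> [x y h | x y x' y' h h' /eqP/restr_eqP hx /eqP/restr_eqP hy]; rewrite !mxE.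
  by case: eqP h => // ->; rewrite agree_off_refl.
by rewrite (eq1 _ _ h) (eq1 _ _ h') !hx ?hy ?inE.
Qed.

Lemma qubit1_proj_hproj k : hproj (qubit1_proj k).
Proof.
split; apply/matrixP => x y; rewrite ?adjE !mxE.
  by rewrite conjC_nat eq_sym; case: eqP => [->|].
rewrite (bigD1 x) //= big1 ?addr0 => [|u hu]; last by rewrite !mxE eq_sym (negbTE hu) mul0r.
by rewrite !mxE eqxx /=; case: eqP => [->|_]; case: (qbit _ k); rewrite /= ?mulr1 ?mulr0.
Qed.

Lemma tr_qubit1_proj_mul k (Y : 'M[C]_(2 ^ n)) :
  \tr (qubit1_proj k *m Y) = \sum_(x | qbit x k) Y x x.
Proof.
rewrite big_mkcond /mxtrace; apply: eq_bigr => x _; rewrite mxE (bigD1 x) //= big1 => [|y hy].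
  by rewrite mxE eqxx /= addr0; case: (qbit x k); rewrite ?mul1r ?mul0r.
by rewrite mxE eq_sym (negbTE hy) mul0r.
Qed.

Lemma tr_qubit1_proj_zero_state k :
  \tr (qubit1_proj k *m proj (zero_state R n)) = 0.
Proof.
rewrite tr_qubit1_proj_mul big1 // => x hb.
rewrite /proj mxE big_ord1 adjE !mxE.
have -> : (val x == 0%N) = false by apply: contraTF hb => /eqP e; rewrite /qbit e /bitn div0n.
by rewrite mul0r.
Qed.

End QubitProjection.

Section TraceNorm.
Variable R : realType.
Local Notation C := (R[i]).
Local Open Scope sesquilinear_scope.
Variable m : nat.
Implicit Types (A D P Q : 'M[C]_m).

Lemma char_poly_conj A P P' : P' *m P = 1%:M -> char_poly (P' *m A *m P) = char_poly A.
Proof.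
move=> hP.
have hmap : map_mx polyC P' *m map_mx polyC P = 1%:M by rewrite -map_mxM hP map_mx1.
rewrite /char_poly; have -> : char_poly_mx (P' *m A *m P) =
    map_mx polyC P' *m char_poly_mx A *m map_mx polyC P.
  rewrite /char_poly_mx mulmxBr mulmxBl !map_mxM ?mulmxA.
  by congr (_ - _); rewrite mul_mx_scalar -scalemxAl hmap scalemx1.
by rewrite !det_mulmx mulrAC -det_mulmx hmap det1 mul1r.
Qed.

Lemma char_poly_diag (l : 'rV[C]_m) : char_poly (diag_mx l) = \prod_i ('X - (l 0 i)%:P).
Proof.
rewrite char_poly_trig ?diag_mx_is_trig //.
by apply: eq_bigr => i _; rewrite mxE eqxx mulr1n.
Qed.

Lemma hermitian_spectral D : adj D = D ->
  let P := spectralmx D in let l := spectral_diag D in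
  [/\ adj P *m P = 1%:M, P *m adj P = 1%:M, D = adj P *m diag_mx l *m P
    & forall i, l 0 i \is Num.real].
Proof.
move=> hD P l.
have /orthomx_spectralP hD' : D \is normalmx by apply/normalmxP; rewrite -[_ ^t*]/(adj D) hD.
have hu := spectral_unitarymx D.
have hPP : P *m adj P = 1%:M by apply/unitarymxP.
have hPP' : adj P *m P = 1%:M by apply: mulmx1C.
have hDe : D = adj P *m diag_mx l *m P by rewrite {1}hD' invmx_unitary.
split => // i.
have hPa : adj P *m adj (adj P) = 1%:M by rewrite adjK.
have : adj (diag_mx l) = diag_mx l.
  by rewrite -[diag_mx l](unitary_conjK _ hPa) adjK -hDe !adjM adjK hD mulmxA.
move/matrixP => /(_ i i); rewrite adjE !mxE eqxx !mulr1n => e.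
by rewrite CrealE e.
Qed.

(* The singular values of a Hermitian matrix are the moduli of its eigenvalues:
   both spectra come out of [char_poly (adj D *m D)]. *)
Lemma trnorm_hermitian D : adj D = D ->
  trnorm D = complex.Re (\sum_i `|spectral_diag D 0 i|).
Proof.
move=> hD; have [hPP' hPP hDe hreal] := hermitian_spectral hD.
set P := spectralmx D in hPP' hPP hDe; set l := spectral_diag D in hDe hreal *.
set B := adj D *m D; have hB : adj B = B by rewrite /B adjM adjK.
have [hQQ' _ hBe _] := hermitian_spectral hB.
set Q := spectralmx B in hQQ' hBe; set s := spectral_diag B in hBe *.
set l2 : 'rV[C]_m := \row_i (l 0 i ^+ 2).
have hB2 : B = adj P *m diag_mx l2 *m P.
  have hdd : diag_mx l *m diag_mx l = diag_mx l2.
    apply/matrixP => i j; rewrite mul_mx_diag !mxE.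
    by case: eqP => [->|_]; rewrite ?mulr1n ?mulr0n ?mul0r // expr2.
  rewrite /B hD {1 2}hDe !mulmxA -(mulmxA _ P) hPP mulmx1.
  by rewrite -(mulmxA (adj P)) hdd.
have hc : char_poly (diag_mx s) = char_poly (diag_mx l2).
  by rewrite -(char_poly_conj (diag_mx s) hQQ') -hBe hB2 char_poly_conj.
rewrite !char_poly_diag -!(big_map (fun i => s 0 i) xpredT (fun x => 'X - x%:P)) in hc.
rewrite -(big_map (fun i => l2 0 i) xpredT (fun x => 'X - x%:P)) in hc.
rewrite /trnorm -/B -(big_map (fun i => s 0 i) xpredT sqrtC) (perm_big _ (prod_XsubC_eq hc)).
rewrite big_map; congr (complex.Re _); apply: eq_bigr => i _.
by rewrite mxE -real_normK ?hreal // sqrCK.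
Qed.

(* With [D = P^* diag(l) P] and [E := P Q P^*], [tr (Q D) = sum_i E_ii l_i] with
   [0 <= E_ii <= 1]; as [sum_i l_i = 0], [2 tr (Q D) = sum_i (2 E_ii - 1) l_i]. *)
Lemma Re_tr_hproj_mul_le D Q : adj D = D -> \tr D = 0 -> hproj Q ->
  complex.Re (\tr (Q *m D)) <= trnorm D / 2.
Proof.
move=> hD htr hQ; have [hPP' hPP hDe hreal] := hermitian_spectral hD.
set P := spectralmx D in hPP' hPP hDe; set l := spectral_diag D in hDe hreal *.
set E := P *m Q *m adj P; have hE : hproj E by apply: hproj_conj.
have htrQD : \tr (Q *m D) = \sum_i E i i * l 0 i.
  rewrite hDe !mulmxA mxtrace_mulC !mulmxA mul_mx_diag /mxtrace.
  by apply: eq_bigr => i _; rewrite mxE.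
have hsum : \sum_i l 0 i = 0.
  by rewrite -mxtrace_diag -htr [in RHS]hDe mxtrace_mulC mulmxA hPP mul1mx.
have key : \tr (Q *m D) + \tr (Q *m D) <= \sum_i `|l 0 i|.
  rewrite htrQD -big_split /=.
  have -> : \sum_i (E i i * l 0 i + E i i * l 0 i) =
            \sum_i ((E i i + E i i - 1) * l 0 i + l 0 i).
    by apply: eq_bigr => i _; rewrite mulrBl mul1r mulrDl addrNK.
  rewrite big_split /= hsum addr0; apply: ler_sum => i _.
  have hx0 := hproj_diag_ge0 i hE; have hx1 := hproj_diag_le1 i hE.
  have hxr : E i i + E i i - 1 \is Num.real by rewrite realB ?realD ?ger0_real.
  apply: (le_trans (real_ler_norm (realM hxr (hreal i)))); rewrite normrM.
  rewrite -[X in _ <= X]mul1r ler_wpM2r // real_ler_norml //.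
  by rewrite lerBrDr addNr addr_ge0 //= lerBlDr lerD.
move: key; rewrite lecE trnorm_hermitian // => /andP[_].
by case: (\tr (Q *m D)) => a b /=; rewrite ler_pdivlMr // mulr_natr mulr2n.
Qed.

End TraceNorm.

Section Entropy.
Variable R : realType.

Definition Hln (t : R) := - (t * ln t) - (1 - t) * ln (1 - t).

Lemma ln_le_subr1 (x : R) : 0 < x -> ln x <= x - 1.
Proof.
move=> hx; have h : -1 < x - 1 by lra.
by have := le_ln1Dx h; rewrite addrC subrK.
Qed.

Lemma ln_prod (I : finType) (F : I -> R) : (forall i, 0 < F i) ->
  ln (\prod_i F i) = \sum_i ln (F i).
Proof.
move=> hF; suff [] : 0 < \prod_i F i /\ ln (\prod_i F i) = \sum_i ln (F i) by [].
apply: (big_rec2 (fun y1 y2 => 0 < y1 /\ ln y1 = y2)); first by rewrite ln1.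
by move=> i y1 y2 _ [h1 h2]; rewrite mulr_gt0 // lnM ?posrE // h2.
Qed.

Variables (n : nat) (p : 'I_(2 ^ n) -> R) (t : 'I_n -> R) (M : R).
Hypotheses (M_gt0 : 0 < M) (p_ge0 : forall x, 0 <= p x) (p_sum1 : \sum_x p x = 1)
  (p_le : forall x, p x <= M^-1) (t_ge0 : forall k, 0 <= t k)
  (t_le : forall k, t k <= 1 - t k)
  (marginal_le : forall k, \sum_(x | qbit x k) p x <= t k).

Let q k := \sum_(x | qbit x k) p x.
Let tb k (b : bool) := if b then t k else 1 - t k.
Let r x := \prod_k tb k (qbit x k).

Lemma tb_pos x k : 0 < p x -> 0 < tb k (qbit x k).
Proof.
move=> hx; rewrite /tb; case: ifP => hb; last by have := t_le k; have := t_ge0 k; lra.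
have : p x <= q k by rewrite /q (bigD1 x) //= ler_wpDr ?sumr_ge0.
by have := marginal_le k; rewrite -/(q k); lra.
Qed.

Lemma prod_distr_sum1 : \sum_x r x = 1.
Proof.
rewrite big_unbits; under eq_bigr => f _ do (rewrite /r; under eq_bigr => k _ do rewrite qbit_unbits).
rewrite -(bigA_distr_bigA tb) big1 // => k _.
by rewrite big_bool /tb /=; lra.
Qed.

Lemma ln_le_entropy : ln M <= - \sum_x p x * ln (p x).
Proof.
have : \sum_x p x * ln (p x) <= \sum_x p x * (- ln M).
  apply: ler_sum => x _; have [->|hx] := eqVneq (p x) 0; first by rewrite !mul0r.
  have hpx : 0 < p x by rewrite lt_neqAle eq_sym hx p_ge0.
  by rewrite ler_wpM2l // -lnV ?posrE // ler_ln ?posrE ?invr_gt0.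
by rewrite -mulr_suml p_sum1 mul1r; lra.
Qed.

Lemma gibbs : \sum_x p x * ln (r x) <= \sum_x p x * ln (p x).
Proof.
suff : \sum_x (p x * ln (r x) - p x * ln (p x)) <= \sum_x (r x - p x).
  by rewrite !sumrB prod_distr_sum1 p_sum1 subrr; lra.
apply: ler_sum => x _; have [->|hx] := eqVneq (p x) 0.
  by rewrite !mul0r subr0 subr_ge0 prodr_ge0 // => k _; rewrite /tb; case: ifP; have := t_le k; have := t_ge0 k; lra.
have hpx : 0 < p x by rewrite lt_neqAle eq_sym hx p_ge0.
have hrx : 0 < r x by apply: prodr_gt0 => k _; apply: tb_pos.
rewrite -mulrBr -ln_div ?posrE //.
have := ler_wpM2l (p_ge0 x) (ln_le_subr1 (divr_gt0 hrx hpx)).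
by rewrite mulrBr mulrCA divff ?gt_eqF // !mulr1.
Qed.

Lemma cross_entropy_prod : \sum_x p x * ln (r x) =
  \sum_k (q k * ln (t k) + (1 - q k) * ln (1 - t k)).
Proof.
transitivity (\sum_x \sum_k p x * ln (tb k (qbit x k))).
  apply: eq_bigr => x _; have [->|hx] := eqVneq (p x) 0.
    by rewrite mul0r big1 // => k _; rewrite mul0r.
  have hpx : 0 < p x by rewrite lt_neqAle eq_sym hx p_ge0.
  by rewrite /r ln_prod ?mulr_sumr // => k; apply: tb_pos.
rewrite exchange_big; apply: eq_bigr => k _.
have -> : 1 - q k = \sum_(x | ~~ qbit x k) p x by rewrite -p_sum1 (bigID (fun x => qbit x k)) /= -/(q k) addrAC subrr add0r.
rewrite /q !mulr_suml [LHS](bigID (fun x => qbit x k)) /=; congr (_ + _); apply: eq_bigr => x hx.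
  by rewrite /tb hx.
by rewrite /tb (negbTE hx).
Qed.

(* [q k <= t k <= 1/2] and [ln t <= ln (1 - t)]: moving weight up to [t k]
   lowers the cross entropy. *)
Lemma cross_entropy_le_Hln k : - (q k * ln (t k) + (1 - q k) * ln (1 - t k)) <= Hln (t k).
Proof.
have hqt : q k <= t k by apply: marginal_le.
have hln : ln (t k) <= ln (1 - t k).
  have [->|h0] := eqVneq (t k) 0; first by rewrite subr0 ln1 ln0.
  have htp : 0 < t k by rewrite lt_neqAle eq_sym h0 t_ge0.
  by rewrite ler_ln ?posrE //; have := t_le k; lra.
have h1 : 0 <= t k - q k by rewrite subr_ge0.
have h2 : 0 <= ln (1 - t k) - ln (t k) by rewrite subr_ge0.
have := mulr_ge0 h1 h2.
rewrite /Hln; set a := ln (t k); set b := ln (1 - t k); nra.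
Qed.

Lemma ln_le_sum_Hln : ln M <= \sum_k Hln (t k).
Proof.
apply: (le_trans ln_le_entropy); have := gibbs.
suff : - \sum_x p x * ln (r x) <= \sum_k Hln (t k) by lra.
by rewrite cross_entropy_prod -sumrN; apply: ler_sum => k _; apply: cross_entropy_le_Hln.
Qed.

End Entropy.

Section MixedState.
Variable R : realType.
Local Notation C := (R[i]).
Variables (n M : nat) (phi : 'I_M -> 'cV[C]_(2 ^ n)).
Hypotheses (M_gt0 : (0 < M)%N) (phi_on : orthonormal_vecs phi).

Lemma hproj_sum_proj : hproj (\sum_i proj (phi i)).
Proof.
split; first by rewrite adj_sum; apply: eq_bigr => i _; rewrite adj_proj.
rewrite mulmx_suml; apply: eq_bigr => i _.
rewrite mulmx_sumr (bigD1 i) //= big1 ?addr0 => [|j hj];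
  rewrite /proj mulmxA -(mulmxA (phi i)) phi_on; first by rewrite eqxx mulmx1.
by rewrite eq_sym (negbTE hj) mul_mx_scalar scale0r mul0mx.
Qed.

Lemma adj_Gamma : adj (Gamma phi) = Gamma phi.
Proof.
rewrite /Gamma adj_scale (proj1 hproj_sum_proj); congr (_ *: _).
by rewrite rmorphV ?unitfE ?pnatr_eq0 -?lt0n // rmorph_nat.
Qed.

Lemma tr_proj_unit m (v : 'cV[C]_m) : adj v *m v = 1%:M -> \tr (v *m adj v) = 1.
Proof. by move=> h; rewrite mxtrace_mulC h mxtrace1. Qed.

Lemma tr_Gamma : \tr (Gamma phi) = 1.
Proof.
rewrite mxtraceZ raddf_sum (eq_bigr (fun _ => 1)) => [|i _]; last first.
  by apply: tr_proj_unit; rewrite phi_on eqxx.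
by rewrite sumr_const card_ord mulVf // pnatr_eq0 -lt0n.
Qed.

End MixedState.

Lemma H2E (R : realType) (p : R) : H2 p = Hln p / ln 2.
Proof. by rewrite /H2 /Hln /log2; ring. Qed.

Section LocalMeasurement.
Variable R : realType.
Local Notation C := (R[i]).

Lemma Re_sum (I : finType) (P : pred I) (F : I -> C) :
  complex.Re (\sum_(i | P i) F i) = \sum_(i | P i) complex.Re (F i).
Proof. by apply: (big_morph (fun z : C => complex.Re z)) => // [[a b] [c e]]. Qed.

Lemma Re_le (z w : C) : z <= w -> complex.Re z <= complex.Re w.
Proof. by rewrite lecE => /andP[]. Qed.

Lemma trnormN m (A : 'M[C]_m) : trnorm (- A) = trnorm A.
Proof. by rewrite /trnorm adjN mulmxN mulNmx opprK. Qed.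

Lemma Re_tr_local_hproj_le n (T : {set 'I_n}) (P rho sigma : 'M[C]_(2 ^ n)) :
  local T P -> hproj P -> adj rho = rho -> adj sigma = sigma -> \tr rho = \tr sigma ->
  complex.Re (\tr (P *m (rho - sigma))) <= trnorm (ptrace T sigma - ptrace T rho) / 2.
Proof.
move=> /local_embedE hPE [hPadj hPP] hrho hsigma htr.
have hQ : hproj (block T P).
  by split; apply: (@embed_inj R n T); rewrite -?embed_adj -?embedM -hPE.
have hD : adj (ptrace T (rho - sigma)) = ptrace T (rho - sigma).
  by rewrite ptrace_adj adjB hrho hsigma.
have hD0 : \tr (ptrace T (rho - sigma)) = 0 by rewrite tr_ptrace raddfB /= htr subrr.
rewrite hPE tr_embed -trnormN opprB -ptraceB.
exact: Re_tr_hproj_mul_le.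
Qed.

End LocalMeasurement.

Section ShallowCircuit.
Variable R : realType.
Local Notation C := (R[i]).
Variables (n M : nat) (psi : 'cV[C]_(2 ^ n)) (phi : 'I_M -> 'cV[C]_(2 ^ n)).
Hypotheses (psi_unit : unit_vector psi) (M_gt0 : (0 < M)%N) (phi_on : orthonormal_vecs phi).
Variable c : seq (seq (gate R n)).
Hypotheses (c_valid : all (@valid_layer R n) c) (c_psi : run c = psi).

Let W := circuit_mx c.
Let W_unitary : W *m adj W = 1%:M := circuit_mx_unitary c_valid.

Let outcome x := complex.Re ((adj W *m Gamma phi *m W) x x).

Lemma outcome_bounds x : 0 <= outcome x <= (M%:R)^-1.
Proof.
have hPi : hproj (adj W *m (\sum_i proj (phi i)) *m W).
  by rewrite -[X in _ *m X](adjK W); apply: hproj_conj (hproj_sum_proj phi_on); rewrite adjK.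
have hRe : complex.Re ((M%:R)^-1 : C) = (M%:R)^-1.
  by rewrite -(rmorph_nat (@real_complex R)) -fmorphV.
have hM0 : (0 : C) <= (M%:R)^-1 by rewrite invr_ge0 ler0n.
rewrite /outcome /Gamma -scalemxAr -scalemxAl mxE -[0]/(complex.Re 0) -hRe.
apply/andP; split; apply: Re_le; first by rewrite mulr_ge0 ?hproj_diag_ge0.
by rewrite -[X in _ <= X]mulr1 ler_wpM2l ?hproj_diag_le1.
Qed.

Lemma sum_outcome : \sum_x outcome x = 1.
Proof.
rewrite -Re_sum -[\sum_x _]/(\tr _) mxtrace_mulC mulmxA W_unitary mul1mx.
by rewrite tr_Gamma.
Qed.

Lemma sum_outcome_qubit1 k : \sum_(x | qbit x k) outcome x =
  complex.Re (\tr (W *m qubit1_proj R k *m adj W *m (Gamma phi - proj psi))).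
Proof.
have W_unitary' : adj W *m W = 1%:M := mulmx1C W_unitary.
have -> : proj psi = W *m proj (zero_state R n) *m adj W.
  by rewrite -c_psi run_circuit_mx /proj adjM !mulmxA.
rewrite -Re_sum -tr_qubit1_proj_mul mulmxBr raddfB /=.
have -> : W *m qubit1_proj R k *m adj W *m (W *m proj (zero_state R n) *m adj W) =
    W *m (qubit1_proj R k *m proj (zero_state R n)) *m adj W.
  by rewrite !mulmxA -(mulmxA _ (adj W) W) W_unitary' mulmx1.
rewrite mxtrace_conj // tr_qubit1_proj_zero_state subr0; congr (complex.Re _).
by rewrite !mulmxA (mxtrace_mulC _ W) !mulmxA.
Qed.

Lemma qubit1_outcome_le k :
  \sum_(x | qbit x k) outcome x <= trnorm (ptrace (lightcone c [set k]) (proj psi) -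
                                          ptrace (lightcone c [set k]) (Gamma phi)) / 2.
Proof.
rewrite sum_outcome_qubit1; apply: Re_tr_local_hproj_le.
- exact: local_circuit_conj (qubit1_proj_local R k).
- by apply: hproj_conj (qubit1_proj_hproj R k); apply: mulmx1C.
- exact: adj_Gamma.
- exact: adj_proj.
- by rewrite tr_Gamma // tr_proj_unit.
Qed.

Variable d : nat.
Hypothesis reduced_close : forall S : {set 'I_n}, (#|S| <= d)%N ->
  trnorm (ptrace S (proj psi) - ptrace S (Gamma phi)) < 1 /\
  n%:R * H2 (trnorm (ptrace S (proj psi) - ptrace S (Gamma phi)) / 2) < log2 (M%:R : R).

Let t k := trnorm (ptrace (lightcone c [set k]) (proj psi) -
                   ptrace (lightcone c [set k]) (Gamma phi)) / 2.

Lemma log2_le_sum_H2 : (2 ^ size c <= d)%N -> log2 (M%:R : R) <= \sum_k H2 (t k).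
Proof.
move=> hd; have hcone k := leq_trans (card_lightcone1 k c_valid) hd.
have ht0 k : 0 <= t k.
  apply: le_trans (qubit1_outcome_le k); apply: sumr_ge0 => x _.
  by case/andP: (outcome_bounds x).
have ht1 k : t k <= 1 - t k by have := (reduced_close (hcone k)).1; rewrite /t; lra.
have hM : 0 < (M%:R : R) by rewrite ltr0n.
have := ln_le_sum_Hln hM (fun x => proj1 (andP (outcome_bounds x))) sum_outcome
  (fun x => proj2 (andP (outcome_bounds x))) ht0 ht1 qubit1_outcome_le.
have hl2 : 0 < ln (2 : R) by apply: ln_gt0; lra.
rewrite -(@ler_pM2r _ (ln 2)^-1) ?invr_gt0 // mulr_suml -/(log2 _).
by under eq_bigr => k _ do rewrite -H2E.
Qed.

Lemma shallow_circuit_depth : (d < 2 ^ size c)%N.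
Proof.
rewrite ltnNge; apply/negP => hd; have hlog := log2_le_sum_H2 hd.
have hcone k := leq_trans (card_lightcone1 k c_valid) hd.
have [n0|n_gt0] := posnP n.
  have h0 : (#|(finset.set0 : {set 'I_n})| <= d)%N by rewrite cards0.
  have := (reduced_close h0).2; have hn0 : (n%:R : R) = 0 by rewrite n0.
  move: hlog; rewrite hn0 mul0r big1 => [|[k hk] _]; last by exfalso; move: hk; rewrite n0.
  by move=> h1 h2; have := lt_le_trans h2 h1; rewrite ltxx.
have : \sum_(k < n) n%:R * H2 (t k) < \sum_(k < n) log2 (M%:R : R).
  apply: ltr_sum; first by apply/hasP; exists (Ordinal n_gt0); rewrite ?mem_index_enum.
  by move=> k _; apply: (reduced_close (hcone k)).2.
rewrite -mulr_sumr sumr_const card_ord -(mulr_natl (log2 _)) => hlt.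
by have := lt_le_trans hlt (ler_wpM2l (ler0n _ n) hlog); rewrite ltxx.
Qed.

End ShallowCircuit.

Lemma log2_lt_succ_trunc_log (R : realType) (d : nat) : (0 < d)%N ->
  log2 (d%:R : R) < (trunc_log 2 d).+1%:R.
Proof.
move=> d_gt0; have hl2 : 0 < ln (2 : R) by apply: ln_gt0; lra.
rewrite /log2 ltr_pdivrMr // mulr_natl -lnXn ?ltr_ln ?posrE ?ltr0n ?exprn_gt0 //.
by rewrite -natrX ltr_nat trunc_log_ltn.
Qed.

Lemma complexity_ge (R : realType) n (psi : 'cV[R[i]]_(2 ^ n)) (L : nat) :
  (forall l, preparable_in psi l -> (L <= l)%N) -> ((L%:R)%:E <= complexity psi)%E.
Proof.
by move=> hL; apply: le_ereal_inf_tmp => _ [l hl <-]; rewrite lee_fin ler_nat hL.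
Qed.

Unset Implicit Arguments.

Theorem proposition5 (R : realType) (n M d : nat)
  (psi : 'cV[R[i]]_(2 ^ n)) (phi : 'I_M -> 'cV[R[i]]_(2 ^ n)) :
  unit_vector psi ->
  (0 < M)%N ->
  orthonormal_vecs phi ->
  (1 <= d)%N ->
  (forall S : {set 'I_n}, (#|S| <= d)%N ->
     trnorm (ptrace S (proj psi) - ptrace S (Gamma phi)) < 1 /\
     n%:R * H2 (trnorm (ptrace S (proj psi) - ptrace S (Gamma phi)) / 2)
       < log2 (M%:R : R)) ->
  ((log2 (d%:R : R))%:E < complexity psi)%E.
Proof.
move=> psi_unit M_gt0 phi_on d_gt0 reduced_close.
apply: (lt_le_trans _ (complexity_ge (L := (trunc_log 2 d).+1) _)).
  by rewrite lte_fin log2_lt_succ_trunc_log.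
move=> l [c [<- c_valid c_psi]].
have := shallow_circuit_depth psi_unit M_gt0 phi_on c_valid c_psi reduced_close.
rewrite ltnNge => /negP hd; rewrite ltnNge; apply/negP => hl; apply: hd.
by apply: (leq_trans _ (@trunc_logP 2 d isT d_gt0)); rewrite leq_exp2l.
Qed.
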